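(* Let $\beta>0$ and let $Y_i:\mathbb{R}^+\to\mathbb{R}^{m\times(mn+2)}$, $i=1,\dots,n$, be the agents' regressors, and let $Y_{F_i}$ be the solution of $\dot Y_{F_i}=-\beta Y_{F_i}+Y_i$, $Y_{F_i}(0)=0$. If the set $\{Y_1,\dots,Y_n\}$ is collectively initially exciting, then the set $\{Y_{F_1},\dots,Y_{F_n}\}$ is collectively initially exciting.
   Context: The regressors are $Y_i(t)=\big[\ddot q_i,\; k(t)\dot q_i,\; \tfrac12 k(t)[Q_{i1}(t)I_m,\dots,Q_{in}(t)I_m]\big]$, where $q_i(t)\in\mathbb{R}^m$ are agent positions, $k(t)>0$ is a bounded gain, and $Q_{ij}(t)$ are entries of the signless Laplacian $\mathcal D(t)+\mathcal A(t)$ of the time-varying interaction graph. A set of bounded, locally integrable signals $\phi_i:\mathbb{R}^+\to\mathbb{R}^{u\times v}$, $i=1,\dots,n$, is collectively initially exciting (C-IE) if there exist constants $\bar T>0$, $\gamma>0$ such that $\int_{t_0}^{t_0+\bar T}\sum_{i=1}^n\phi_i^\top(\tau)\phi_i(\tau)\,d\tau\ge\gamma I_v$ for some $t_0\ge0$. *)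

From HB Require Import structures.
From mathcomp Require Import all_boot all_order all_algebra.
From mathcomp Require Import all_classical all_reals all_analysis.
Set Implicit Arguments. Unset Strict Implicit. Unset Printing Implicit Defensive.
Import Order.TTheory GRing.Theory Num.Theory.
Import numFieldNormedType.Exports.
Local Open Scope classical_set_scope.
Local Open Scope ring_scope.

Section Defs.
Variable R : realType.
Local Notation mu := (@lebesgue_measure R).

(* Signals are functions on R; only their restriction to R^+ = [0, +oo) matters. *)

(* bounded on R^+ (entrywise, equivalent to any matrix norm) *)
Definition bounded_sig (u v : nat) (phi : R -> 'M[R]_(u, v)) : Prop :=
  exists M : R, forall t, 0 <= t -> forall j k, `|phi t j k| <= M.

Definition loc_integrable (u v : nat) (phi : R -> 'M[R]_(u, v)) : Prop :=
  forall a b : R, 0 <= a -> forall j k,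
    mu.-integrable `[a, b] (fun t => (phi t j k)%:E).

Definition mx_integral (u v : nat) (a b : R) (phi : R -> 'M[R]_(u, v))
  : 'M[R]_(u, v) :=
  \matrix_(j, k) (\int[mu]_(t in `[a, b]) phi t j k).

Definition loewner_ge (v : nat) (A B : 'M[R]_v) : Prop :=
  forall x : 'cV[R]_v, 0 <= (x^T *m (A - B) *m x) 0 0.

Definition CIE (u v n : nat) (phi : 'I_n -> R -> 'M[R]_(u, v)) : Prop :=
  (forall i, bounded_sig (phi i)) /\ (forall i, loc_integrable (phi i)) /\
  exists (Tbar gamma t0 : R), 0 < Tbar /\ 0 < gamma /\ 0 <= t0 /\
    loewner_ge
      (mx_integral t0 (t0 + Tbar)
         (fun tau => \sum_(i < n) (phi i tau)^T *m phi i tau))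
      (gamma%:M).

(* YF is the (Caratheodory) solution on R^+ of  dYF/dt = -beta YF + Y,
   YF(0) = 0, i.e. YF is locally integrable, YF(0)=0 and
   YF(t) = int_0^t (-beta YF(s) + Y(s)) ds  for all t >= 0. *)
Definition filtered (u v : nat) (beta : R) (Y YF : R -> 'M[R]_(u, v)) : Prop :=
  loc_integrable YF /\ YF 0 = 0 /\
  forall t, 0 <= t -> YF t = mx_integral 0 t (fun s => - beta *: YF s + Y s).

End Defs.

(* The filtered signals stay below sup |Y| / beta: once Y_F exceeds
   that level the right-hand side -beta Y_F + Y is nonpositive.  For excitation
   take the window [0, t0 + T].  If x^T (int_0^(t0+T) sum_i Y_Fi^T Y_Fi) x = 0,
   then Y_Fi x = 0 a.e., so t |-> int_0^t Y_i x = Y_Fi(t) x + beta int_0^t Y_Fi x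
   vanishes a.e., hence everywhere by continuity, and Lebesgue differentiation
   gives Y_i x = 0 a.e. on [0, t0 + T]; the excitation of the Y_i on
   [t0, t0 + T] then forces x = 0.  Finally a positive definite symmetric
   matrix Q dominates c I, with c computed from the entries of Q^-1. *)

From HB Require Import structures.
From mathcomp Require Import all_boot all_order all_algebra.
From mathcomp Require Import all_classical all_reals all_analysis.
From mathcomp Require Import measurable_realfun lebesgue_integral_differentiation.
From mathcomp Require Import ring lra.
Import Order.TTheory GRing.Theory Num.Theory.
Import numFieldNormedType.Exports.
Local Open Scope classical_set_scope.
Local Open Scope ring_scope.
Set Implicit Arguments. Unset Strict Implicit.

#[local] Instance lebesgue_ae_filter (R : realType) :
  Filter (almost_everywhere (@lebesgue_measure R)) := ae_filter_ringOfSetsType _.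

Section RealIntegrals.
Context {R : realType}.
Local Notation mu := (@lebesgue_measure R).
Implicit Types (f g h : R -> R).

Lemma integrableRD D f g : measurable D ->
  mu.-integrable D (EFin \o f) -> mu.-integrable D (EFin \o g) ->
  mu.-integrable D (EFin \o (fun x => f x + g x)).
Proof.
move=> mD fi gi; apply: (eq_integrable mD _ _ _ (integrableD mD fi gi)) => x _.
by rewrite /= EFinD.
Qed.

Lemma integrableRZl D (k : R) f : measurable D ->
  mu.-integrable D (EFin \o f) -> mu.-integrable D (EFin \o (fun x => k * f x)).
Proof.
move=> mD fi; apply: (eq_integrable mD _ _ _ (integrableZl mD k fi)) => x _.
by rewrite /= EFinM.
Qed.

Lemma integrableR_sum D I (s : seq I) (F : I -> R -> R) : measurable D ->
  (forall i, mu.-integrable D (EFin \o F i)) ->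
  mu.-integrable D (EFin \o (fun x => \sum_(i <- s) F i x)).
Proof.
move=> mD Fi.
apply: (eq_integrable mD _ _ _ (integrable_sum mD s (fun i _ => Fi i))) => x _.
by rewrite /= sumEFin.
Qed.

Lemma Rintegral_sum D I (s : seq I) (F : I -> R -> R) : measurable D ->
  (forall i, mu.-integrable D (EFin \o F i)) ->
  \int[mu]_(x in D) \sum_(i <- s) F i x = \sum_(i <- s) \int[mu]_(x in D) F i x.
Proof.
move=> mD Fi; elim: s => [|i s IHs].
  by under eq_Rintegral do rewrite big_nil; rewrite Rintegral_cst// mul0r big_nil.
under eq_Rintegral do rewrite big_cons.
by rewrite RintegralD ?IHs ?big_cons//; exact: integrableR_sum.
Qed.

Lemma Rintegral_le0 D h : measurable D -> mu.-integrable D (EFin \o h) ->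
  (forall x, D x -> h x <= 0) -> \int[mu]_(x in D) h x <= 0.
Proof.
move=> mD hi h0; rewrite -oppr_ge0 -mulN1r -RintegralZl//.
by apply: Rintegral_ge0 => x Dx; rewrite mulN1r oppr_ge0 h0.
Qed.

Lemma Rintegral_ae_eq0 D h : measurable D -> measurable_fun D h ->
  {ae mu, forall x, D x -> h x = 0} -> \int[mu]_(x in D) h x = 0.
Proof.
move=> mD mh h0; rewrite /Rintegral (@ae_eq_integral _ _ _ mu D (cst 0%E))//.
- by rewrite integral0.
- exact/measurable_EFinP.
- by apply: filterS h0 => x + Dx => /(_ Dx) ->.
Qed.

Lemma ae_eq0_Rintegral_ge0 D h : measurable D ->
  mu.-integrable D (EFin \o h) -> (forall x, D x -> 0 <= h x) ->
  \int[mu]_(x in D) h x = 0 -> {ae mu, forall x, D x -> h x = 0}.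
Proof.
move=> mD hi h0 hD0.
have hD0E : (\int[mu]_(x in D) (EFin \o h) x = 0)%E.
  by rewrite -(fineK (integrable_fin_num mD hi)); move: hD0; rewrite /Rintegral => ->.
have : (\int[mu]_(x in D) `|(EFin \o h) x| = 0)%E.
  by rewrite -hD0E; apply: eq_integral => x /[!inE] Dx; rewrite /= ger0_norm ?h0.
move/(ae_eq_integral_abs mu mD (measurable_int mu hi)).
by apply: filterS => x /= + Dx => /(_ Dx) [].
Qed.

Definition bounded_measurable D f :=
  measurable_fun D f /\ exists M, forall x, D x -> `|f x| <= M.

Lemma bounded_measurable_integrable (a b : R) f :
  bounded_measurable `[a, b] f -> mu.-integrable `[a, b] (EFin \o f).
Proof.
move=> [mf [M fM]]; apply: measurable_bounded_integrable => //.
  have := lebesgue_measure_itv `[a, b]; rewrite /= => ->.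
  by case: ifP => _; rewrite ?ltry.
exists M; split; rewrite ?num_real// => M' MM' x Dx /=.
by rewrite (le_trans (fM x Dx))// ltW.
Qed.

Lemma bounded_measurable_cst D (c : R) : bounded_measurable D (fun=> c).
Proof. by split; [exact: measurable_cst | exists `|c|]. Qed.

Lemma bounded_measurableM D f g : measurable D ->
  bounded_measurable D f -> bounded_measurable D g ->
  bounded_measurable D (fun x => f x * g x).
Proof.
move=> mD [mf [M fM]] [mg [N gN]]; split; first exact: measurable_funM.
by exists (M * N) => x Dx; rewrite normrM ler_pM ?fM ?gN.
Qed.

Lemma bounded_measurable_sum D I (s : seq I) (F : I -> R -> R) : measurable D ->
  (forall i, bounded_measurable D (F i)) ->
  bounded_measurable D (fun x => \sum_(i <- s) F i x).
Proof.
move=> mD Fb; elim: s => [|i s [ms [M sM]]].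
  by under eq_fun do rewrite big_nil; exact: bounded_measurable_cst.
have [mi [N iN]] := Fb i; under eq_fun do rewrite big_cons.
split; first exact: measurable_funD.
exists (N + M) => x Dx; rewrite (le_trans (ler_normD _ _))//.
by rewrite lerD ?iN ?sM.
Qed.

End RealIntegrals.

Section IntervalContinuity.
Context {R : realType}.
Local Notation mu := (@lebesgue_measure R).

Lemma within_itv_continuous_near (F : R -> R) (a b t e : R) :
  {within `[a, b], continuous F} -> a <= t <= b -> 0 < e ->
  exists2 d, 0 < d & forall s, a <= s <= b -> `|s - t| < d -> `|F s - F t| < e.
Proof.
move=> Fc tab e0.
have := (subspace_continuousP _ _).1 Fc t; rewrite /= in_itv/= tab => /(_ isT).
move/cvgrPdist_lt => /(_ e e0); case/nbhs_ballP => d /= d0 Fd.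
exists d => // s sab st; rewrite distrC; apply: Fd.
  by rewrite /ball/= distrC.
by rewrite /= in_itv/= sab.
Qed.

Lemma last_crossing (F : R -> R) (a b K : R) : a <= b ->
  {within `[a, b], continuous F} -> F a <= K ->
  exists s, [/\ a <= s <= b, F s <= K & forall u, s < u <= b -> K < F u].
Proof.
move=> ab Fc FaK; pose E := [set u | a <= u <= b /\ F u <= K].
have Ea : E a by split; rewrite ?lexx ?ab.
have ubE : ubound E b by move=> u [/andP[]].
have supE : has_sup E by split; [exists a | exists b].
have Esup u : a <= u <= b -> F u <= K -> u <= sup E.
  by move=> uab FuK; exact: sup_upper_bound.
have sab : a <= sup E <= b by rewrite Esup ?ab ?lexx//= ge_sup//; exists a.
exists (sup E); split => //; last first.
  move=> u /andP[su ub]; rewrite ltNge; apply/negP => FuK.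
  have uab : a <= u <= b by rewrite ub (le_trans _ (ltW su))// (andP sab).1.
  by have := Esup u uab FuK; rewrite leNgt su.
rewrite leNgt; apply/negP => KFs.
have e0 : 0 < F (sup E) - K by rewrite subr_gt0.
have [d d0 Fd] := within_itv_continuous_near Fc sab e0.
suff : sup E <= sup E - d / 2 by lra.
apply: ge_sup; first by exists a.
move=> u [uab FuK]; rewrite leNgt; apply/negP => du.
have us := Esup u uab FuK.
have := Fd u uab; rewrite ler0_norm ?subr_le0// ltr_norml.
have -> : - (u - sup E) < d by lra.
by move=> /(_ isT) /andP[+ _]; lra.
Qed.

Lemma continuous_ae_eq0_itv (F : R -> R) (a b : R) : a < b ->
  {within `[a, b], continuous F} -> {ae mu, forall x, `[a, b]%classic x -> F x = 0} ->
  forall t, a <= t <= b -> F t = 0.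
Proof.
move=> ab Fc [N [mN N0 FN]] t tab; apply/eqP/negP => /negP Ft.
have Ft0 : 0 < `|F t| by rewrite normr_gt0.
have [d d0 Fd] := within_itv_continuous_near Fc tab Ft0.
pose r := Num.min (d / 2) ((b - a) / 2).
have r0 : 0 < r by rewrite lt_min !divr_gt0// subr_gt0.
have [rd rba] : r <= d / 2 /\ r <= (b - a) / 2 by split; rewrite ge_min lexx ?orbT.
have [c [ac crb ct]] : exists c, [/\ a <= c, c + r <= b &
    forall u, c <= u <= c + r -> `|u - t| < d].
  case/andP: tab => ta tb; have [trb|btr] := leP (t + r) b.
    by exists t; split => // u /andP[tu ur]; rewrite ltr_norml; apply/andP; split; lra.
  exists (t - r); split; [lra|lra|] => u /andP[tu ur].
  by rewrite ltr_norml; apply/andP; split; lra.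
have : `[c, c + r] `<=` N.
  move=> u /=; rewrite in_itv/= => /andP[cu ur]; apply: FN => /= Fu0.
  have uab : a <= u <= b by apply/andP; split; lra.
  have cur : c <= u <= c + r by rewrite cu ur.
  have := Fd u uab (ct u cur).
  by rewrite Fu0 ?sub0r ?normrN ?ltxx// /= in_itv.
move/(subset_measure0 (mu := mu) (measurable_itv `[c, c + r]) mN) => /(_ N0).
have := lebesgue_measure_itv `[c, c + r]; rewrite /= => ->.
rewrite lte_fin ltrDl r0 -EFinD => -[]; lra.
Qed.

Lemma ae_neq (a : R) : {ae mu, forall x, x != a}.
Proof.
exists [set a]; split => //; first exact: lebesgue_measure_set1.
by move=> x /= /negP; rewrite negbK => /eqP.
Qed.

Lemma ae_eq0_of_parameterized_integral_eq0 (w : R -> R) (a b : R) : a < b ->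
  mu.-integrable `[a, b] (EFin \o w) ->
  (forall t, a <= t <= b -> \int[mu]_(s in `[a, t]) w s = 0) ->
  {ae mu, forall x, `[a, b]%classic x -> w x = 0}.
Proof.
move=> ab wi w0; pose g := w \_ `[a, b].
have gloc : locally_integrable [set: R] g by exact: integrable_locally.
have gi : mu.-integrable `[a, b] (EFin \o g).
  by apply: eq_integrable wi => // x xab /=; rewrite /g patchE xab.
apply: filterS3 (ae_neq a) (ae_neq b) (lebesgue_differentiation gloc).
move=> x xNa xNb gx /=; rewrite in_itv/= => /andP[ax xb].
have {}ax : a < x by rewrite lt_neqAle eq_sym xNa.
have {}xb : x < b by rewrite lt_neqAle xNb.
have ax' : (BLeft a < BRight x)%E by rewrite /Order.lt/=.
have -> : w x = g x by rewrite /g patchE mem_set//= in_itv/= !ltW.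
have [_ <-] := FTC1_lebesgue_pt xb gi ax' gx.
rewrite derive1E (@near_eq_derive _ _ _ _ (cst 0)) ?derive_cst//.
have xab : x \in `]a, b[ by rewrite in_itv/= ax xb.
apply: filterS (near_in_itvoo xab) => y; rewrite in_itv/= => /andP[ay yb].
rewrite /= -(w0 y); last by rewrite !ltW.
apply: eq_Rintegral => u; rewrite inE/= in_itv/= => /andP[au uy].
by rewrite /g patchE mem_set//= in_itv/= au (le_trans uy (ltW yb)).
Qed.

End IntervalContinuity.

Section FilterSolution.
Context {R : realType}.
Local Notation mu := (@lebesgue_measure R).

Record filter_solution (beta : R) (g f : R -> R) : Prop := FilterSolution {
  filter_solution_integrable :
    forall t, 0 <= t -> mu.-integrable `[0, t] (EFin \o f);
  filter_input_integrable :
    forall t, 0 <= t -> mu.-integrable `[0, t] (EFin \o g);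
  filter_solution_eq : forall t, 0 <= t ->
    f t = \int[mu]_(s in `[0, t]) (- beta * f s + g s) }.

Section Theory.
Variables (beta : R) (g f : R -> R).
Hypothesis fs : filter_solution beta g f.

Lemma filter_rhs_integrable t : 0 <= t ->
  mu.-integrable `[0, t] (EFin \o (fun s => - beta * f s + g s)).
Proof.
move=> t0; apply: integrableRD => //; last exact: (filter_input_integrable fs t0).
by apply: integrableRZl => //; exact: (filter_solution_integrable fs t0).
Qed.

Lemma filter_solution_at0 : f 0 = 0.
Proof. by rewrite (filter_solution_eq fs (lexx 0)) set_itv1 Rintegral_set1. Qed.

Lemma filter_solution_continuous t : 0 <= t -> {within `[0, t], continuous f}.
Proof.
move=> t0; apply: subspace_eq_continuous
  (parameterized_integral_continuous t0 (filter_rhs_integrable t0)).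
move=> u; rewrite inE/= in_itv/= => /andP[u0 _].
exact/esym/(filter_solution_eq fs u0).
Qed.

Lemma filter_solution_increment s t : 0 <= s -> s <= t ->
  f t - f s = \int[mu]_(u in `]s, t]) (- beta * f u + g u).
Proof.
move=> s0 st; have t0 := le_trans s0 st.
rewrite (filter_solution_eq fs t0) (filter_solution_eq fs s0).
by apply: Rintegral_itvB; rewrite ?bnd_simp//; exact: filter_rhs_integrable.
Qed.

Lemma filter_solution_le M : 0 < beta -> 0 <= M ->
  (forall t, 0 <= t -> g t <= M) -> forall t, 0 <= t -> f t <= M / beta.
Proof.
move=> beta0 M0 gM t t0; set K := M / beta.
(* after the last time s with f s <= K, the integrand -beta f + g is <= 0 *)
have betaK : beta * K = M by rewrite /K mulrC divfK ?gt_eqF.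
have f0K : f 0 <= K by rewrite filter_solution_at0 divr_ge0 // ltW.
have [s [/andP[s0 st] fsK fK]] := last_crossing t0 (filter_solution_continuous t0) f0K.
apply: le_trans fsK; rewrite -subr_le0 filter_solution_increment//.
have sti : mu.-integrable `]s, t] (EFin \o (fun u => - beta * f u + g u)).
  apply: integrableS (filter_rhs_integrable t0) => //.
  by apply: subset_itvr; rewrite bnd_simp.
apply: Rintegral_le0 => // u /=; rewrite in_itv/= => /[dup] /fK Kfu /andP[su _].
by have := gM u (le_trans s0 (ltW su)); nra.
Qed.

Lemma filter_input_ae_eq0 S : 0 < S ->
  {ae mu, forall t, `[0, S]%classic t -> f t = 0} ->
  {ae mu, forall t, `[0, S]%classic t -> g t = 0}.
Proof.
move=> S0 f0; have gi := filter_input_integrable fs (ltW S0).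
have Ig t : 0 <= t <= S -> \int[mu]_(s in `[0, t]) g s = f t.
  case/andP=> t0 tS; have fi := filter_solution_integrable fs t0.
  have If : \int[mu]_(s in `[0, t]) f s = 0.
    apply: Rintegral_ae_eq0 => //; first by case/integrableP: fi => /measurable_EFinP.
    apply: filterS f0 => u + u0t; apply; move: u0t => /=.
    by rewrite !in_itv/= => /andP[-> ut]; exact: le_trans tS.
  rewrite (filter_solution_eq fs t0) RintegralD//.
  - by rewrite RintegralZl// If mulr0 add0r.
  - exact: integrableRZl.
  - exact: (filter_input_integrable fs t0).
apply: (ae_eq0_of_parameterized_integral_eq0 S0 gi).
apply: (continuous_ae_eq0_itv S0 (parameterized_integral_continuous (ltW S0) gi)).
by apply: filterS f0 => t ft0 tS; rewrite /parameterized_integral Ig ?ft0.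
Qed.

End Theory.

Lemma filter_solution0 beta : filter_solution beta (fun=> 0) (fun=> 0).
Proof.
have i0 t : mu.-integrable `[0, t] (EFin \o (fun=> (0 : R))).
  exact: (eq_integrable _ _ _ _ (integrable0 mu _)).
split=> // t t0; under eq_Rintegral do rewrite mulr0 addr0.
by rewrite Rintegral_cst// mul0r.
Qed.

Lemma filter_solutionZ beta c g f : filter_solution beta g f ->
  filter_solution beta (fun t => c * g t) (fun t => c * f t).
Proof.
move=> fs; split=> t t0.
- by apply: integrableRZl => //; exact: (filter_solution_integrable fs t0).
- by apply: integrableRZl => //; exact: (filter_input_integrable fs t0).
rewrite (filter_solution_eq fs t0) -RintegralZl//; last exact: filter_rhs_integrable.
by apply: eq_Rintegral => s _; ring.
Qed.

Lemma filter_solutionD beta g1 f1 g2 f2 :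
  filter_solution beta g1 f1 -> filter_solution beta g2 f2 ->
  filter_solution beta (fun t => g1 t + g2 t) (fun t => f1 t + f2 t).
Proof.
move=> fs1 fs2; split=> t t0.
- exact: integrableRD (filter_solution_integrable fs1 t0)
    (filter_solution_integrable fs2 t0).
- exact: integrableRD (filter_input_integrable fs1 t0)
    (filter_input_integrable fs2 t0).
rewrite (filter_solution_eq fs1 t0) (filter_solution_eq fs2 t0) -RintegralD//;
  try exact: filter_rhs_integrable.
by apply: eq_Rintegral => s _; ring.
Qed.

Lemma filter_solution_sum beta I (s : seq I) (G F : I -> R -> R) :
  (forall i, filter_solution beta (G i) (F i)) ->
  filter_solution beta (fun t => \sum_(i <- s) G i t) (fun t => \sum_(i <- s) F i t).
Proof.
move=> fs; elim: s => [|i s IHs].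
  by under eq_fun do rewrite big_nil; under [X in _ _ _ X]eq_fun do rewrite big_nil;
    exact: filter_solution0.
under eq_fun do rewrite big_cons; under [X in _ _ _ X]eq_fun do rewrite big_cons.
exact: filter_solutionD.
Qed.

Lemma filter_solution_norm_le beta M g f : 0 < beta -> filter_solution beta g f ->
  (forall t, 0 <= t -> `|g t| <= M) -> forall t, 0 <= t -> `|f t| <= M / beta.
Proof.
move=> beta0 fs gM t t0; have M0 : 0 <= M := le_trans (normr_ge0 _) (gM 0 (lexx 0)).
rewrite ler_norml; apply/andP; split.
  rewrite lerNl -mulN1r.
  apply: (filter_solution_le (filter_solutionZ (-1) fs)) => // u u0.
  by rewrite mulN1r (le_trans _ (gM u u0))// -normrN ler_norm.
apply: (filter_solution_le fs) => // u u0.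
exact: le_trans (ler_norm _) (gM u u0).
Qed.

End FilterSolution.

Section FilteredMatrices.
Context {R : realType}.
Variables (beta : R) (u v : nat) (Y YF : R -> 'M[R]_(u, v)).
Hypotheses (YF_filtered : filtered beta Y YF) (Y_integrable : loc_integrable Y).

Lemma filtered_entry j k :
  filter_solution beta (fun t => Y t j k) (fun t => YF t j k).
Proof.
case: YF_filtered => YFi [_ YFeq]; split=> t t0.
- exact: YFi.
- exact: Y_integrable.
by rewrite YFeq// mxE; apply: eq_Rintegral => s _; rewrite !mxE.
Qed.

Lemma filtered_mulmx_entry w (x : 'M[R]_(v, w)) r k :
  filter_solution beta (fun t => (Y t *m x) r k) (fun t => (YF t *m x) r k).
Proof.
have mulmxE (A : R -> 'M[R]_(u, v)) :
    (fun t => (A t *m x) r k) = fun t => \sum_l x l k * A t r l.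
  by apply/funext => t; rewrite mxE; apply: eq_bigr => l _; rewrite mulrC.
rewrite !mulmxE; apply: filter_solution_sum => l.
exact/filter_solutionZ/filtered_entry.
Qed.

End FilteredMatrices.

Section QuadraticForms.
Variable R : realFieldType.

Definition qform v (Q : 'M[R]_v) (x : 'cV[R]_v) : R := (x^T *m Q *m x) 0 0.

Definition gram m v n (A : 'I_n -> 'M[R]_(m, v)) : 'M[R]_v :=
  \sum_(i < n) (A i)^T *m A i.

Lemma mulmx_trmx_selfE v (x : 'cV[R]_v) : (x^T *m x) 0 0 = \sum_j x j 0 ^+ 2.
Proof. by rewrite mxE; apply: eq_bigr => j _; rewrite mxE expr2. Qed.

Lemma mulmx_trmx_self_ge0 v (x : 'cV[R]_v) : 0 <= (x^T *m x) 0 0.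
Proof. by rewrite mulmx_trmx_selfE sumr_ge0// => j _; exact: sqr_ge0. Qed.

Lemma mulmx_trmx_self_eq0 v (x : 'cV[R]_v) : (x^T *m x) 0 0 = 0 -> x = 0.
Proof.
rewrite mulmx_trmx_selfE => /eqP.
rewrite psumr_eq0 => [/allP x0|j _]; last exact: sqr_ge0.
apply/matrixP => j k; rewrite ord1 mxE.
by apply/eqP; rewrite -sqrf_eq0; apply: implyP (x0 j (mem_index_enum j)) isT.
Qed.

Lemma le_sqr_mulmx_trmx_self v (x : 'cV[R]_v) j : x j 0 ^+ 2 <= (x^T *m x) 0 0.
Proof.
by rewrite mulmx_trmx_selfE (bigD1 j)//= lerDl sumr_ge0// => i _; exact: sqr_ge0.
Qed.

Lemma qformE v (Q : 'M[R]_v) x :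
  qform Q x = \sum_j \sum_k x j 0 * x k 0 * Q j k.
Proof.
rewrite /qform mxE exchange_big; apply: eq_bigr => k _.
rewrite mxE big_distrl; apply: eq_bigr => j _; rewrite mxE /=; ring.
Qed.

Lemma qform_gram m v n (A : 'I_n -> 'M[R]_(m, v)) x :
  qform (gram A) x = \sum_(i < n) \sum_(r < m) (A i *m x) r 0 ^+ 2.
Proof.
rewrite /qform /gram mulmx_sumr mulmx_suml summxE; apply: eq_bigr => i _.
by rewrite mulmxA -mulmxA -trmx_mul mulmx_trmx_selfE.
Qed.

Lemma trmx_gram m v n (A : 'I_n -> 'M[R]_(m, v)) : (gram A)^T = gram A.
Proof.
by rewrite /gram raddf_sum; apply: eq_bigr => i _; rewrite /= trmx_mul trmxK.
Qed.

Lemma qform_le_sum_norm v (P : 'M[R]_v) x :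
  qform P x <= (\sum_j \sum_k `|P j k|) * (x^T *m x) 0 0.
Proof.
rewrite qformE mulr_suml; apply: ler_sum => j _; rewrite mulr_suml.
apply: ler_sum => k _; rewrite (le_trans (ler_norm _))// normrM mulrC ler_wpM2l//.
have := le_sqr_mulmx_trmx_self x j; have := le_sqr_mulmx_trmx_self x k.
rewrite normrM -[x j 0 ^+ 2]real_normK ?num_real// -[x k 0 ^+ 2]real_normK ?num_real//.
nra.
Qed.

Lemma qform_eq0_unitmx v (Q : 'M[R]_v) :
  (forall x, qform Q x = 0 -> x = 0) -> Q \in unitmx.
Proof.
move=> Qdef; rewrite unitmxE unitfE; apply/negP => /det0P[w w0 wQ].
have /Qdef/(congr1 trmx) : qform Q w^T = 0 by rewrite /qform trmxK wQ mul0mx mxE.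
by rewrite trmxK linear0 => w_0; rewrite w_0 eqxx in w0.
Qed.

Lemma qform_ge_scalar v (Q : 'M[R]_v) : Q^T = Q ->
  (forall x, 0 <= qform Q x) -> (forall x, qform Q x = 0 -> x = 0) ->
  exists2 c, 0 < c & forall x, c * (x^T *m x) 0 0 <= qform Q x.
Proof.
move=> QT Q0 Qdef; pose P := invmx Q; pose C : R := \sum_j \sum_k `|P j k|.
pose c : R := (C + 1)^-1.
have C1 : 0 < C + 1 by rewrite ltr_wpDl ?sumr_ge0// => j _; rewrite sumr_ge0.
have c0 : 0 < c by rewrite invr_gt0.
have cC : c * C = 1 - c.
  by have := mulVf (lt0r_neq0 C1); rewrite -/c mulrDr mulr1 => <-; ring.
exists c => // x; pose y := P *m x; set n := (x^T *m x) 0 0.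
(* expand 0 <= qform Q (x - c y), using Q y = x and qform P x <= C n *)
have Qy : Q *m y = x by rewrite mulKVmx// qform_eq0_unitmx.
have yQ : y^T *m Q = x^T by rewrite -[Q in _ *m Q]QT -trmx_mul Qy.
have yQy : qform Q y = qform P x by rewrite /qform yQ /y mulmxA.
have := Q0 (x - c *: y).
have -> : qform Q (x - c *: y) = qform Q x - c * (x^T *m Q *m y) 0 0
    - c * (y^T *m Q *m x) 0 0 + c ^+ 2 * qform Q y.
  rewrite /qform [(x - _)^T]linearB/= [(c *: y)^T]linearZ/= !mulmxBl !mulmxBr.
  by rewrite -!scalemxAl -!scalemxAr !mxE; ring.
rewrite -mulmxA Qy yQ yQy -/n.
have cPx : c ^+ 2 * qform P x <= c * n - c ^+ 2 * n.
  have -> : c * n - c ^+ 2 * n = c ^+ 2 * (C * n).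
    by transitivity (c * (c * C) * n); [rewrite cC | ]; ring.
  by rewrite ler_wpM2l ?sqr_ge0// qform_le_sum_norm.
have : 0 <= c ^+ 2 * n by rewrite mulr_ge0 ?sqr_ge0// mulmx_trmx_self_ge0.
lra.
Qed.

End QuadraticForms.

Section IntegralGram.
Context {R : realType}.
Local Notation mu := (@lebesgue_measure R).

Lemma loewner_ge_scalarP v (A : 'M[R]_v) c :
  loewner_ge A c%:M <-> forall x, c * (x^T *m x) 0 0 <= qform A x.
Proof.
have qE x : (x^T *m (A - c%:M) *m x) 0 0 = qform A x - c * (x^T *m x) 0 0.
  by rewrite mulmxBr mulmxBl mul_mx_scalar -scalemxAl /qform !mxE.
by split=> Ac x; have := Ac x; rewrite ?qE subr_ge0.
Qed.

Lemma loewner_ge_scalar_definite v (A : 'M[R]_v) c x :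
  0 < c -> loewner_ge A c%:M -> qform A x = 0 -> x = 0.
Proof.
move=> c0 /loewner_ge_scalarP /(_ x) + Ax0; rewrite Ax0 pmulr_rle0// => x0.
by apply: mulmx_trmx_self_eq0; apply/eqP; rewrite eq_le x0 mulmx_trmx_self_ge0.
Qed.

Lemma qform_mx_integral v (a b : R) (G : R -> 'M[R]_v) x :
  (forall j k, mu.-integrable `[a, b] (EFin \o (fun t => G t j k))) ->
  qform (mx_integral a b G) x = \int[mu]_(t in `[a, b]) qform (G t) x.
Proof.
move=> Gi; under eq_Rintegral do rewrite qformE.
rewrite qformE Rintegral_sum// => [|j]; last first.
  by apply: integrableR_sum => // k; exact: integrableRZl.
apply: eq_bigr => j _; rewrite Rintegral_sum// => [|k]; last exact: integrableRZl.
by apply: eq_bigr => k _; rewrite mxE RintegralZl.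
Qed.

Lemma bounded_measurable_entry u v (phi : R -> 'M[R]_(u, v)) (a b : R) j k :
  bounded_sig phi -> loc_integrable phi -> 0 <= a ->
  bounded_measurable `[a, b] (fun t => phi t j k).
Proof.
move=> [M phiM] phii a0; split.
  by case/integrableP: (phii a b a0 j k) => /measurable_EFinP.
by exists M => t; rewrite /= in_itv/= => /andP[ta _]; apply: phiM; exact: le_trans ta.
Qed.

Section Gram.
Variables (m v n : nat) (A : 'I_n -> R -> 'M[R]_(m, v)) (a b : R).
Hypothesis A_bm : forall i r j, bounded_measurable `[a, b] (fun t => A i t r j).
Local Notation G := (fun t => gram (fun i => A i t)).

Lemma bounded_measurable_mulmx_entry i w (x : 'M[R]_(v, w)) r k :
  bounded_measurable `[a, b] (fun t => (A i t *m x) r k).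
Proof.
have -> : (fun t => (A i t *m x) r k) = fun t => \sum_l A i t r l * x l k.
  by apply/funext => t; rewrite mxE.
apply: bounded_measurable_sum => // l.
by apply: bounded_measurableM => //; exact: bounded_measurable_cst.
Qed.

Lemma bounded_measurable_gram_entry j k :
  bounded_measurable `[a, b] (fun t => G t j k).
Proof.
have -> : (fun t => G t j k) = fun t => \sum_i \sum_r A i t r j * A i t r k.
  apply/funext => t; rewrite summxE; apply: eq_bigr => i _.
  by rewrite mxE; apply: eq_bigr => r _; rewrite mxE.
apply: bounded_measurable_sum => // i; apply: bounded_measurable_sum => // r.
exact: bounded_measurableM.
Qed.

Lemma bounded_measurable_sum_sqr_mulmx (x : 'cV[R]_v) :
  bounded_measurable `[a, b] (fun t => \sum_i \sum_r (A i t *m x) r 0 ^+ 2).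
Proof.
apply: bounded_measurable_sum => // i; apply: bounded_measurable_sum => // r.
exact: bounded_measurableM (bounded_measurable_mulmx_entry _ _ _ _)
  (bounded_measurable_mulmx_entry _ _ _ _).
Qed.

Lemma qform_integral_gram (x : 'cV[R]_v) : qform (mx_integral a b G) x =
  \int[mu]_(t in `[a, b]) \sum_i \sum_r (A i t *m x) r 0 ^+ 2.
Proof.
rewrite qform_mx_integral => [|j k]; last first.
  exact/bounded_measurable_integrable/bounded_measurable_gram_entry.
by apply: eq_Rintegral => t _; rewrite qform_gram.
Qed.

Lemma qform_integral_gram_ge0 (x : 'cV[R]_v) : 0 <= qform (mx_integral a b G) x.
Proof.
rewrite qform_integral_gram; apply: Rintegral_ge0 => t _.
by apply: sumr_ge0 => i _; apply: sumr_ge0 => r _; exact: sqr_ge0.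
Qed.

Lemma trmx_integral_gram : (mx_integral a b G)^T = mx_integral a b G.
Proof.
apply/matrixP => j k; rewrite !mxE; apply: eq_Rintegral => t _.
by rewrite -[in RHS]trmx_gram mxE.
Qed.

Lemma qform_integral_gram_eq0P (x : 'cV[R]_v) : qform (mx_integral a b G) x = 0 <->
  forall i r, {ae mu, forall t, `[a, b]%classic t -> (A i t *m x) r 0 = 0}.
Proof.
have [mF _] := bounded_measurable_sum_sqr_mulmx x.
have sq0 t i : 0 <= \sum_r (A i t *m x) r 0 ^+ 2.
  by apply: sumr_ge0 => r _; exact: sqr_ge0.
rewrite qform_integral_gram; split=> [F0 i r | Ax0].
  have : {ae mu, forall t, `[a, b]%classic t ->
      \sum_i \sum_r (A i t *m x) r 0 ^+ 2 = 0}.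
    apply: ae_eq0_Rintegral_ge0 F0 => // [|t _].
      exact/bounded_measurable_integrable/bounded_measurable_sum_sqr_mulmx.
    by apply: sumr_ge0 => i0 _; exact: sq0.
  apply: filterS => t + tab => /(_ tab) F0t.
  have Ai0 := psumr_eq0P (fun i _ => sq0 t i) F0t (i := i) isT.
  have /eqP := psumr_eq0P (fun r _ => sqr_ge0 _) Ai0 (i := r) isT.
  by rewrite sqrf_eq0 => /eqP.
apply: Rintegral_ae_eq0 => //.
have : {ae mu, forall t, forall i r, `[a, b]%classic t -> (A i t *m x) r 0 = 0}.
  by apply: filter_forall => i; apply: filter_forall => r; exact: Ax0.
apply: filterS => t Ax0t tab.
by apply: big1 => i _; apply: big1 => r _; rewrite Ax0t// expr0n.
Qed.

End Gram.
End IntegralGram.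

Section FilteredGram.
Context {R : realType}.
Local Notation mu := (@lebesgue_measure R).
Variables (beta : R) (u v n : nat) (Y YF : 'I_n -> R -> 'M[R]_(u, v)).
Hypotheses (YF_filtered : forall i, filtered beta (Y i) (YF i))
  (Y_integrable : forall i, loc_integrable (Y i)).

Lemma filtered_bounded i : 0 < beta -> bounded_sig (Y i) -> bounded_sig (YF i).
Proof.
move=> beta0 [M YM]; exists (M / beta) => t t0 j k.
have YFij := filtered_entry (YF_filtered i) (Y_integrable i) j k.
by apply: (filter_solution_norm_le beta0 YFij) => // s s0; exact: YM.
Qed.

Lemma filtered_gram_qform_eq0 (S : R) (x : 'cV[R]_v) : 0 < S ->
  (forall i r j, bounded_measurable `[0, S] (fun t => YF i t r j)) ->
  qform (mx_integral 0 S (fun t => gram (fun i => YF i t))) x = 0 ->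
  forall i r, {ae mu, forall t, `[0, S]%classic t -> (Y i t *m x) r 0 = 0}.
Proof.
move=> S0 YFbm /(qform_integral_gram_eq0P YFbm) YFx0 i r.
exact: (filter_input_ae_eq0
  (filtered_mulmx_entry (YF_filtered i) (Y_integrable i) x r 0) S0 (YFx0 i r)).
Qed.

End FilteredGram.

Unset Implicit Arguments.

Theorem proposition6 (R : realType) (m n : nat) (beta : R)
  (Y YF : 'I_n -> R -> 'M[R]_(m, m * n + 2)) :
  0 < beta ->
  (forall i, filtered beta (Y i) (YF i)) ->
  CIE Y -> CIE YF.
Proof.
move=> beta0 YFf [Yb [Yi [T [gam [t0 [T0 [gam0 [t00 Yexc]]]]]]]].
have YFi i : loc_integrable (YF i) by case: (YFf i).
have YFb i : bounded_sig (YF i) := filtered_bounded YFf Yi beta0 (Yb i).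
set S := t0 + T; have S0 : 0 < S by rewrite /S; lra.
have YFbm i r j : bounded_measurable `[0, S] (fun t => YF i t r j).
  exact: bounded_measurable_entry (YFb i) (YFi i) (lexx 0).
have Ybm i r j : bounded_measurable `[t0, S] (fun t => Y i t r j).
  exact: bounded_measurable_entry (Yb i) (Yi i) t00.
have Qdef x : qform (mx_integral 0 S (fun t => gram (fun i => YF i t))) x = 0 -> x = 0.
  move/(filtered_gram_qform_eq0 YFf Yi S0 YFbm) => Yx0.
  apply: (loewner_ge_scalar_definite gam0 Yexc).
  apply/(qform_integral_gram_eq0P Ybm) => i r; apply: filterS (Yx0 i r).
  move=> t + tS; apply; move: tS; rewrite /= !in_itv/= => /andP[t0t ->].
  by rewrite (le_trans t00 t0t).
have [c c0 Qc] := qform_ge_scalar (trmx_integral_gram YF 0 S)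
  (qform_integral_gram_ge0 YFbm) Qdef.
split=> //; split=> //; exists S, c, 0; rewrite add0r; do 3!split=> //.
exact/loewner_ge_scalarP.
Qed.
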